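(* Let $0<\alpha\le\beta<\infty$ and $M,\tilde M>0$ with $M/(2^{4\beta+1}\tilde M)\ge1$, and let $\rho=[M/(2^{2\beta+1}\tilde M)]^{1/\beta}$. Let $\zeta\in(0,1]$, let $\mathbf{c}_0$ be such that $\{\mathbf{x}:\|\mathbf{x}-\mathbf{c}_0\|_\infty\le\rho\zeta^{\alpha/\beta}\}\subset[0,1]^d$, and let $\mathbf{c}$ satisfy $\|\mathbf{c}-\mathbf{c}_0\|_\infty\le\rho\zeta^{\alpha/\beta}-\zeta$. Define $y:[0,1]^d\to\mathbb{R}$ by $y(\mathbf{x})=\frac M2\zeta^\alpha-\frac M2\|\mathbf{x}-\mathbf{c}\|_\infty^\alpha$ if $\|\mathbf{x}-\mathbf{c}\|_\infty\le\zeta$; $y(\mathbf{x})=0$ if $\|\mathbf{x}-\mathbf{c}\|_\infty>\zeta$ and $\|\mathbf{x}-\mathbf{c}_0\|_\infty\le\rho\zeta^{\alpha/\beta}$; $y(\mathbf{x})=2^\beta\tilde M\rho^\beta\zeta^\alpha-2^\beta\tilde M\|\mathbf{x}-\mathbf{c}_0\|_\infty^\beta$ if $\|\mathbf{x}-\mathbf{c}\|_\infty>\zeta$ and $\|\mathbf{x}-\mathbf{c}_0\|_\infty>\rho\zeta^{\alpha/\beta}$. Then $y$ has unique maximizer $\mathbf{x}^*=\mathbf{c}$ on $[0,1]^d$ and $\tilde M\|\mathbf{x}^*-\mathbf{x}\|_\infty^\beta\le|y(\mathbf{x}^* )-y(\mathbf{x})|\le M\|\mathbf{x}^*-\mathbf{x}\|_\infty^\alpha$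 for all $\mathbf{x}\in[0,1]^d$.
   Context: $\|\mathbf{x}\|_\infty=\max_l|x_l|$. The condition $M/(2^{4\beta+1}\tilde M)\ge1$ is a standing requirement imposed by the paper on the constants in this construction. *)

From HB Require Import structures.
From mathcomp Require Import all_boot all_order all_algebra.
From mathcomp Require Import all_classical all_reals all_analysis.
Set Implicit Arguments. Unset Strict Implicit. Unset Printing Implicit Defensive.
Import Order.TTheory GRing.Theory Num.Theory.
Local Open Scope ring_scope.

(* sup-norm distance ||x - c||_oo = max_l |x_l - c_l| (0 when d = 0). *)
Definition supdist (R : realType) (d : nat) (x c : 'I_d -> R) : R :=
  \big[Num.max/0]_(i < d) `|x i - c i|.

Definition in_cube (R : realType) (d : nat) (x : 'I_d -> R) : Prop :=
  forall i, 0 <= x i <= 1.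

Definition yfun (R : realType) (d : nat) (alpha beta M Mt zeta rho : R)
  (c0 c : 'I_d -> R) (x : 'I_d -> R) : R :=
  if supdist x c <= zeta then
    M / 2 * zeta `^ alpha - M / 2 * supdist x c `^ alpha
  else if supdist x c0 <= rho * zeta `^ (alpha / beta) then 0
  else 2 `^ beta * Mt * rho `^ beta * zeta `^ alpha
       - 2 `^ beta * Mt * supdist x c0 `^ beta.

From HB Require Import structures.
From mathcomp Require Import all_boot all_order all_algebra.
From mathcomp Require Import all_classical all_reals all_analysis.
From mathcomp Require Import ring lra.
Import Order.TTheory GRing.Theory Num.Theory.
Local Open Scope ring_scope.

(* Write r = ||x - c||, s = ||x - c0||, D = ||c - c0|| and R0 = rho zeta^(alpha/beta).
   Then y(c) = M/2 zeta^alpha and y(c) - y(x) depends only on (r, s): it is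
   M/2 r^alpha on the zeta-ball around c, the constant M/2 zeta^alpha on the rest
   of the R0-ball around c0, and outside that ball it exceeds this constant by
   2^beta Mt (s^beta - R0^beta).  Since |r - s| <= D <= R0, in each region one of
   r, s is at most twice the other or at most 2 R0, and each doubling costs a
   factor 2^beta under x |-> x^beta; the condition M >= 2^(4 beta + 1) Mt absorbs
   these factors, while r <= 1 on the cube gives r^beta <= r^alpha. *)

Section PowR.
Context {R : realType}.
Implicit Types a b r u v x y : R.

Lemma ge0_ger_powR r x y : 0 <= r <= 1 -> 0 < x -> x <= y -> r `^ y <= r `^ x.
Proof.
move=> /andP[r0 r1] x0 xy; have [->|rN0] := eqVneq r 0.
  by rewrite !powR0 ?gt_eqF // (lt_le_trans x0 xy).
by apply: ger_powR => //; rewrite lt_neqAle eq_sym rN0 r0.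
Qed.

Lemma powR_ge1 a b : 1 <= a -> 0 <= b -> 1 <= a `^ b.
Proof. by move=> a1 b0; rewrite -[leLHS](powRr0 a); apply: ler_powR. Qed.

Lemma ler_powR2r b u v : 0 <= b -> 0 <= u -> u <= v -> u `^ b <= v `^ b.
Proof. by move=> b0 u0 uv; apply: (ge0_ler_powR b0) => //; rewrite nnegrE (le_trans u0). Qed.

Lemma powR_le_double b u v : 0 <= b -> 0 <= u -> u <= 2 * v ->
  u `^ b <= 2 `^ b * v `^ b.
Proof. by move=> b0 u0 uv; rewrite -powRM ?ler_powR2r //; lra. Qed.

Lemma powR_natMD1 (n : nat) a b : 0 < a -> a `^ (n%:R * b + 1) = (a `^ b) ^+ n * a.
Proof.
move=> a0; rewrite powRD ?(gt_eqF a0) ?implybT // (mulrC n%:R b) powRrM.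
by rewrite powR_mulrn ?powR_ge0 // powRr1 // ltW.
Qed.

End PowR.

Section SupDistance.
Context {R : realType} {d : nat}.
Implicit Types x y z : 'I_d -> R.

Lemma supdist_ge0 x z : 0 <= supdist x z.
Proof. exact: bigmax_ge_id. Qed.

Lemma ler_supdist x z i : `|x i - z i| <= supdist x z.
Proof. exact: le_bigmax. Qed.

Lemma supdist_le x z b :
  0 <= b -> (forall i, `|x i - z i| <= b) -> supdist x z <= b.
Proof. by move=> b0 hb; apply: bigmax_le. Qed.

Lemma supdistC x z : supdist x z = supdist z x.
Proof. by apply: eq_bigr => i _; rewrite distrC. Qed.

Lemma supdistxx x : supdist x x = 0.
Proof. by apply/le_anti; rewrite supdist_ge0 supdist_le // => i; rewrite subrr normr0. Qed.

Lemma supdist_triangle x y z : supdist x z <= supdist x y + supdist y z.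
Proof.
apply: supdist_le => [|i]; first by rewrite addr_ge0 ?supdist_ge0.
by rewrite (le_trans (ler_distD (y i) _ _)) // lerD ?ler_supdist.
Qed.

Lemma supdist_eq0 x z : supdist x z = 0 -> x = z.
Proof.
move=> h; apply: boolp.funext => i; apply/eqP; rewrite -subr_eq0 -normr_le0 -h.
exact: ler_supdist.
Qed.

Lemma supdist_cube_le1 x z : in_cube x -> in_cube z -> supdist x z <= 1.
Proof.
move=> hx hz; apply: supdist_le => // i.
by move: (hx i) (hz i) => /andP[? ?] /andP[? ?]; rewrite ler_norml; apply/andP; split; lra.
Qed.

End SupDistance.

Section Constants.
Variables (R : realType) (beta M Mt : R).
Hypotheses (beta_gt0 : 0 < beta) (Mt_gt0 : 0 < Mt).

Local Notation P := (2 `^ beta).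

Let P_gt0 : 0 < P.
Proof. by rewrite powR_gt0. Qed.

Lemma rho_powR_eq : 0 <= M ->
  P ^+ 2 * Mt * ((M / (2 `^ (2 * beta + 1) * Mt)) `^ beta^-1) `^ beta * 2 = M.
Proof.
move=> M0; rewrite -powRrM mulVf ?gt_eqF // powRr1; last first.
  by rewrite divr_ge0 // ltW // mulr_gt0 ?powR_gt0.
by rewrite (powR_natMD1 2) // -/P; field; rewrite !gt_eqF.
Qed.

Lemma Mt_small_of_ratio : 1 <= M / (2 `^ (4 * beta + 1) * Mt) ->
  P ^+ 2 * Mt * 2 <= M.
Proof.
rewrite (powR_natMD1 4) // -/P ler_pdivlMr ?mulr_gt0 ?exprn_gt0 // mul1r.
apply: le_trans; rewrite mulrAC !ler_pM2r //.
apply: ler_weXn2l => //.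
by apply: powR_ge1; [rewrite ler1n | exact: ltW].
Qed.

End Constants.

Section Profile.
Variables (R : realType) (alpha beta M Mt zeta rho : R).
Hypotheses (alpha_gt0 : 0 < alpha) (alpha_le_beta : alpha <= beta).
Hypotheses (Mt_gt0 : 0 < Mt) (zeta_ge0 : 0 <= zeta) (rho_ge0 : 0 <= rho).
Hypothesis Mt_small : (2 `^ beta) ^+ 2 * Mt * 2 <= M.
Hypothesis rho_powR : (2 `^ beta) ^+ 2 * Mt * rho `^ beta * 2 = M.

Local Notation P := (2 `^ beta).
Local Notation a := (zeta `^ alpha).
Local Notation R0 := (rho * zeta `^ (alpha / beta)).

(* lra and nra ignore section hypotheses: the proofs below copy the ones they
   need into the local context. *)

Definition profile (r s : R) : R :=
  if r <= zeta then M / 2 * a - M / 2 * r `^ alpha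
  else if s <= R0 then 0
  else P * Mt * rho `^ beta * a - P * Mt * s `^ beta.

Let beta_gt0 : 0 < beta. Proof. exact: lt_le_trans alpha_le_beta. Qed.

Let P_ge1 : 1 <= P.
Proof. by apply: powR_ge1; [rewrite ler1n | exact: ltW]. Qed.

Let Mt_le : Mt * 2 <= M.
Proof. by apply: le_trans Mt_small; rewrite ler_pM2r // ler_pMl // exprn_ege1. Qed.

Let M_gt0 : 0 < M.
Proof. by apply: lt_le_trans Mt_le; rewrite mulr_gt0. Qed.

Let PMt_rho_le : P * Mt * rho `^ beta * 2 <= M.
Proof.
rewrite -rho_powR; apply: ler_wpM2r => //; apply: ler_wpM2r; first exact: powR_ge0.
apply: ler_wpM2r; first exact: ltW.
by rewrite expr2 ler_peMl // (le_trans ler01).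
Qed.

Let R0_powR : R0 `^ beta = rho `^ beta * a.
Proof. by rewrite powRM ?powR_ge0 // -powRrM mulfVK // gt_eqF. Qed.

Lemma profile0 (s : R) : profile 0 s = M / 2 * a.
Proof. by rewrite /profile zeta_ge0 powR0 ?gt_eqF // mulr0 subr0. Qed.

Lemma profile_gap_inner (r s : R) : 0 <= r <= 1 -> r <= zeta ->
  Mt * r `^ beta <= M / 2 * a - profile r s <= M * r `^ alpha.
Proof.
move=> /andP[r0 r1] rz; rewrite /profile rz opprB addrC subrK.
have rba : r `^ beta <= r `^ alpha by apply: ge0_ger_powR; rewrite ?r0.
have ra0 := powR_ge0 r alpha.
have Mt_rba := ler_wpM2l (ltW Mt_gt0) rba.
have Mt_ra := ler_wpM2r ra0 Mt_le.
have Mra0 := mulr_ge0 (ltW M_gt0) ra0.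
rewrite mulrAC; apply/andP; split; lra.
Qed.

Lemma profile_gap_middle (r s D : R) : D <= R0 -> zeta < r -> r <= s + D ->
  s <= R0 -> Mt * r `^ beta <= M / 2 * a - profile r s <= M * r `^ alpha.
Proof.
move=> DR0 zr rsD sR0; rewrite /profile (leNgt r) zr sR0 subr0.
have ra : r `^ beta <= P * (rho `^ beta * a).
  by have z0 := zeta_ge0; rewrite -R0_powR; apply: powR_le_double; [exact: ltW|lra..].
have ar : a <= r `^ alpha by apply: ler_powR2r; [exact: ltW|exact: zeta_ge0|exact: ltW].
have a0 := powR_ge0 zeta alpha.
have Mt_ra := ler_wpM2l (ltW Mt_gt0) ra.
have PMt_rho_a := ler_wpM2r a0 PMt_rho_le.
have M_ar := ler_wpM2l (ltW M_gt0) ar.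
have Ma0 := mulr_ge0 (ltW M_gt0) a0.
rewrite mulrAC; apply/andP; split; lra.
Qed.

Lemma outer_term_le (r s D : R) : r <= 1 -> D <= R0 -> zeta < r ->
  0 <= s -> s <= r + D -> P * Mt * s `^ beta * 2 <= M * r `^ alpha.
Proof.
move=> r1 DR0 zr s0 srD.
have z0 := zeta_ge0; have b0 := ltW beta_gt0; have r0 : 0 <= r by lra.
have PMt0 : 0 <= P * Mt * 2 by rewrite !mulr_ge0 ?powR_ge0 ?ltW.
have rba : r `^ beta <= r `^ alpha by apply: ge0_ger_powR; rewrite ?r0.
have M_rba := ler_wpM2l (ltW M_gt0) rba.
have [s_le|s_gt] := lerP s (2 * R0).
  have sb : s `^ beta <= P * (rho `^ beta * a).
    by rewrite -R0_powR; apply: powR_le_double; lra.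
  have ar : a <= r `^ alpha by apply: ler_powR2r; [exact: ltW|exact: z0|exact: ltW].
  have PMt_sb := ler_wpM2l PMt0 sb.
  have M_ar := ler_wpM2l (ltW M_gt0) ar.
  have rhoE := rho_powR.
  nra.
have sb : s `^ beta <= P * r `^ beta by apply: powR_le_double; lra.
have PMt_sb := ler_wpM2l PMt0 sb.
have Mt_rb := ler_wpM2r (powR_ge0 r beta) Mt_small.
nra.
Qed.

Lemma profile_gap_outer (r s D : R) : r <= 1 -> D <= R0 -> zeta < r ->
  r <= s + D -> s <= r + D -> R0 < s ->
  Mt * r `^ beta <= M / 2 * a - profile r s <= M * r `^ alpha.
Proof.
move=> r1 DR0 zr rsD srD R0s.
rewrite /profile (leNgt r) zr (leNgt s) R0s /=.
have z0 := zeta_ge0; have b0 := ltW beta_gt0.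
have R00 : 0 <= R0 by rewrite mulr_ge0 ?powR_ge0.
have s0 : 0 <= s by lra.
have rb : r `^ beta <= P * s `^ beta by apply: powR_le_double; lra.
have ar : a <= r `^ alpha by apply: ler_powR2r; [exact: ltW|exact: z0|exact: ltW].
have a0 := powR_ge0 zeta alpha.
have Mt_rb := ler_wpM2l (ltW Mt_gt0) rb.
have PMt_rho_a := ler_wpM2r a0 PMt_rho_le.
have outer := @outer_term_le r s D r1 DR0 zr s0 srD.
have M_ar := ler_wpM2l (ltW M_gt0) ar.
have PMt_rho_a0 : 0 <= P * Mt * rho `^ beta * a by rewrite !mulr_ge0 ?powR_ge0 ?ltW.
rewrite mulrAC; apply/andP; split; lra.
Qed.

Lemma profile_gap (r s D : R) : 0 <= r <= 1 -> D <= R0 ->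
  r <= s + D -> s <= r + D ->
  Mt * r `^ beta <= M / 2 * a - profile r s <= M * r `^ alpha.
Proof.
move=> /andP[r0 r1] DR0 rsD srD.
have [rz|zr] := lerP r zeta; first by apply: profile_gap_inner; rewrite ?r0.
have [sR0|R0s] := lerP s R0; first exact: profile_gap_middle DR0 zr rsD sR0.
exact: profile_gap_outer r1 DR0 zr rsD srD R0s.
Qed.

Local Notation y := (yfun alpha beta M Mt zeta rho).

Lemma yfunE d (c0 c x : 'I_d -> R) :
  y c0 c x = profile (supdist x c) (supdist x c0).
Proof. by []. Qed.

Lemma yfun_gap d (c0 c x : 'I_d -> R) : supdist c c0 <= R0 -> supdist x c <= 1 ->
  Mt * supdist x c `^ beta <= y c0 c c - y c0 c x <= M * supdist x c `^ alpha.
Proof.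
move=> cR0 x1; rewrite !yfunE supdistxx profile0.
apply: (profile_gap _ _ (supdist c c0)); rewrite ?supdist_ge0 //.
- by rewrite (supdistC c c0) supdist_triangle.
- exact: supdist_triangle.
Qed.

End Profile.

Theorem lemma4 (R : realType) (d : nat) (alpha beta M Mt zeta : R)
  (c0 c : 'I_d -> R) :
  0 < alpha -> alpha <= beta -> 0 < M -> 0 < Mt ->
  1 <= M / (2 `^ (4 * beta + 1) * Mt) ->
  0 < zeta -> zeta <= 1 ->
  let rho := (M / (2 `^ (2 * beta + 1) * Mt)) `^ beta^-1 in
  (forall x : 'I_d -> R,
     supdist x c0 <= rho * zeta `^ (alpha / beta) -> in_cube x) ->
  supdist c c0 <= rho * zeta `^ (alpha / beta) - zeta ->
  let y := yfun alpha beta M Mt zeta rho c0 c in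
  [/\ in_cube c,
      (forall x, in_cube x -> y x <= y c),
      (forall x, in_cube x -> y x = y c -> x = c) &
      (forall x, in_cube x ->
         Mt * supdist c x `^ beta <= `|y c - y x| <= M * supdist c x `^ alpha)].
Proof.
move=> alpha_gt0 alpha_le_beta M_gt0 Mt_gt0 ratio_ge1 zeta_gt0 _ rho ball_cube c_near y.
have beta_gt0 := lt_le_trans alpha_gt0 alpha_le_beta.
have c_R0 : supdist c c0 <= rho * zeta `^ (alpha / beta) by lra.
have c_cube := ball_cube c c_R0.
have gap x : in_cube x ->
    Mt * supdist x c `^ beta <= y c - y x <= M * supdist x c `^ alpha.
  move=> x_cube; apply: yfun_gap => //.
  - exact: ltW.
  - exact: powR_ge0.
  - exact: Mt_small_of_ratio.
  - exact/rho_powR_eq/ltW.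
  - exact: supdist_cube_le1.
split=> // x x_cube; have /andP[lo hi] := gap x x_cube;
  have lo0 : 0 <= Mt * supdist x c `^ beta by rewrite mulr_ge0 ?powR_ge0 // ltW.
- lra.
- move=> yxc; apply/supdist_eq0/(@powR_eq0_eq0 _ _ beta)/eqP.
  by rewrite eq_le powR_ge0 andbT -(pmulr_rle0 _ Mt_gt0) -(subrr (y c)) -{2}yxc.
- by rewrite (supdistC c x) ger0_norm ?lo ?hi //; lra.
Qed.
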